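(* Let $n \ge 2$ be an integer and let $1 \le \underline{x}_i < \bar{x}_i$ for $i \in \{1,2\}$. Consider the bilevel problem $$\max_{x \in \mathbb{R}^2} \; F(x,y) = x_1 - 2y_{n+1} + y_{n+2} \quad \text{s.t.} \quad (x_1,x_2) \in [\underline{x}_1,\bar{x}_1] \times [\underline{x}_2,\bar{x}_2],\; y \in S(x),$$ where $S(x)$ is the set of optimal solutions of the lower-level problem $$\max_{y \in \mathbb{R}^{n+2}} \; f(x,y) = y_1 - y_n\,(x_1 + x_2 - y_{n+1} - y_{n+2})$$ subject to $y_1 + y_n = \tfrac12$, $y_i^2 \le y_{i+1}$ for $i \in \{1,\dots,n-1\}$, $y_i \ge 0$ for $i \in \{1,\dots,n\}$, $y_{n+1} \in [0,x_1]$, $y_{n+2} \in [-x_2,x_2]$. Then this bilevel problem has a unique solution, given by $x^* = (\underline{x}_1,\bar{x}_2)$, with optimal objective function value $F^* = -\underline{x}_1 + \bar{x}_2$.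
   Context: For every feasible $x$, $S(x)$ is a singleton, so the bilevel problem is well defined (no distinction between optimistic and pessimistic variants is needed). *)

From HB Require Import structures.
From mathcomp Require Import all_boot all_order all_algebra.
From mathcomp Require Import reals.
Set Implicit Arguments. Unset Strict Implicit. Unset Printing Implicit Defensive.
Import Order.TTheory GRing.Theory Num.Theory.
Local Open Scope ring_scope.

(* Lower-level variable y in R^(n+2), stored as y : 'I_(n.+2) -> R (0-based);
   yc y k is the 1-based coordinate y_k, for 1 <= k <= n+2. *)
Definition yc (R : realType) (n : nat) (y : 'I_n.+2 -> R) (k : nat) : R :=
  y (inord k.-1).

Definition lower_feas (R : realType) (n : nat) (x : R * R) (y : 'I_n.+2 -> R) : Prop :=
  [/\ yc y 1 + yc y n = 1 / 2,
      (forall i : nat, (1 <= i <= n.-1)%N -> yc y i ^+ 2 <= yc y i.+1),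
      (forall i : nat, (1 <= i <= n)%N -> 0 <= yc y i),
      0 <= yc y n.+1 <= x.1 &
      - x.2 <= yc y n.+2 <= x.2].

Definition f_low (R : realType) (n : nat) (x : R * R) (y : 'I_n.+2 -> R) : R :=
  yc y 1 - yc y n * (x.1 + x.2 - yc y n.+1 - yc y n.+2).

Definition S_opt (R : realType) (n : nat) (x : R * R) (y : 'I_n.+2 -> R) : Prop :=
  lower_feas x y /\ (forall z : 'I_n.+2 -> R, lower_feas x z -> f_low x z <= f_low x y).

Definition F_up (R : realType) (n : nat) (x : R * R) (y : 'I_n.+2 -> R) : R :=
  x.1 - 2 * yc y n.+1 + yc y n.+2.

Definition upper_feas (R : realType) (lx1 ux1 lx2 ux2 : R) (x : R * R) : Prop :=
  lx1 <= x.1 <= ux1 /\ lx2 <= x.2 <= ux2.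

Definition bilevel_sol (R : realType) (n : nat) (lx1 ux1 lx2 ux2 : R)
    (x : R * R) (y : 'I_n.+2 -> R) : Prop :=
  [/\ upper_feas lx1 ux1 lx2 ux2 x, S_opt x y &
      forall (x' : R * R) (y' : 'I_n.+2 -> R),
        upper_feas lx1 ux1 lx2 ux2 x' -> S_opt x' y' -> F_up x' y' <= F_up x y].

From HB Require Import structures.
From mathcomp Require Import all_boot all_order all_algebra.
From mathcomp Require Import reals.
From mathcomp Require Import lra zify.
Set Implicit Arguments. Unset Strict Implicit. Unset Printing Implicit Defensive.
Import Order.TTheory GRing.Theory Num.Theory.
Local Open Scope ring_scope.

(* The constraints y_i^2 <= y_(i+1) force y_n >= y_1^(2^(n-1)), so y_1 + y_1^(2^(n-1)) <= 1/2
   and y_n > 0.  Hence y_1 is at most the root t of t + t^(2^(n-1)) = 1/2, and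
   f = y_1 - y_n (x_1 + x_2 - y_(n+1) - y_(n+2)) <= y_1 <= t because the bracket is
   nonnegative.  The value t is attained by y_i = t^(2^(i-1)), y_(n+1) = x_1, y_(n+2) = x_2,
   so every lower-level optimum has a zero bracket, i.e. y_(n+1) = x_1 and y_(n+2) = x_2,
   and F = x_2 - x_1 on the graph of S.  The leader maximizes x_2 - x_1 over the box. *)

Lemma exists_root_addr_expr (R : realType) (N : nat) (c : R) :
  (0 < N)%N -> 0 <= c -> exists2 t : R, 0 <= t & t + t ^+ N = c.
Proof.
move=> N_gt0 c_ge0.
have [|t /andP[t_ge0 _]] := poly_ivt (p := 'X + 'X^N - c%:P) c_ge0.
  by rewrite !hornerE expr0n gtn_eqF //= sub0r oppr_le0 c_ge0 addrAC subrr add0r exprn_ge0.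
by rewrite rootE !hornerE subr_eq0 => /eqP; exists t.
Qed.

Section LowerLevel.
Variables (R : realType) (n : nat).
Hypothesis n_gt0 : (0 < n)%N.
Variable x : R * R.
Implicit Type y : 'I_n.+2 -> R.

Lemma lower_feas_chain y i : lower_feas x y -> (1 <= i <= n)%N ->
  yc y 1 ^+ (2 ^ i.-1) <= yc y i.
Proof.
case=> _ sq_le y_ge0 _ _; elim: i => [//|[|i] IHi] i_bd; first by rewrite expr1.
have y1_ge0 : 0 <= yc y 1 by apply: y_ge0; lia.
have yi_ge0 : 0 <= yc y i.+1 by apply: y_ge0; lia.
apply: le_trans (sq_le i.+1 _); last by lia.
rewrite /= expnSr exprM lerXn2r ?nnegrE ?exprn_ge0 //.
by apply: IHi; lia.
Qed.

Lemma lower_feas_yn_gt0 y : lower_feas x y -> 0 < yc y n.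
Proof.
move=> feas.
have chain : yc y 1 ^+ (2 ^ n.-1) <= yc y n by apply: lower_feas_chain => //; lia.
case: feas => sum_y _ y_ge0 _ _.
rewrite lt0r y_ge0 ?andbT; last by lia.
apply/eqP => yn0; move: sum_y chain; rewrite yn0 addr0 => ->.
have : (0 : R) < (1 / 2) ^+ (2 ^ n.-1) by apply: exprn_gt0; lra.
lra.
Qed.

Lemma lower_feas_gap_ge0 y : lower_feas x y ->
  0 <= x.1 + x.2 - yc y n.+1 - yc y n.+2.
Proof. by case=> _ _ _ /andP[_ ?] /andP[_ ?]; lra. Qed.

Lemma f_low_le_y1 y : lower_feas x y -> f_low x y <= yc y 1.
Proof.
move=> feas; rewrite /f_low gerBl.
by apply: mulr_ge0; [apply: ltW; apply: lower_feas_yn_gt0 | apply: lower_feas_gap_ge0].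
Qed.

Variable t : R.
Hypotheses (t_ge0 : 0 <= t) (t_root : t + t ^+ (2 ^ n.-1) = 1 / 2).

Lemma lower_feas_y1_le y : lower_feas x y -> yc y 1 <= t.
Proof.
move=> feas.
have chain : yc y 1 ^+ (2 ^ n.-1) <= yc y n by apply: lower_feas_chain => //; lia.
have y1_ge0 : 0 <= yc y 1 by case: feas => _ _ y_ge0 _ _; apply: y_ge0; lia.
case: feas => sum_y _ _ _ _.
rewrite leNgt; apply/negP => t_lt_y1.
have : t ^+ (2 ^ n.-1) <= yc y 1 ^+ (2 ^ n.-1) by rewrite lerXn2r ?nnegrE // ltW.
by move=> le_pow; have := t_root; lra.
Qed.

Definition lower_sol : 'I_n.+2 -> R := fun j =>
  if (j < n)%N then t ^+ (2 ^ j) else if j == n :> nat then x.1 else x.2.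

Lemma yc_lower_sol i : (1 <= i <= n)%N -> yc lower_sol i = t ^+ (2 ^ i.-1).
Proof. by move=> i_bd; rewrite /yc /lower_sol inordK; [case: ifP => //; lia | lia]. Qed.

Lemma yc_lower_sol_n1 : yc lower_sol n.+1 = x.1.
Proof. by rewrite /yc /lower_sol inordK // ltnn eqxx. Qed.

Lemma yc_lower_sol_n2 : yc lower_sol n.+2 = x.2.
Proof. by rewrite /yc /lower_sol inordK // ltnNge leqnSn /= gtn_eqF. Qed.

Hypotheses (x1_ge0 : 0 <= x.1) (x2_ge0 : 0 <= x.2).

Lemma lower_sol_feas : lower_feas x lower_sol.
Proof.
split.
- by rewrite !yc_lower_sol ?expr1 //; lia.
- by move=> i i_bd; rewrite !yc_lower_sol -?exprM -?expnSr ?prednK //; lia.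
- by move=> i i_bd; rewrite yc_lower_sol ?exprn_ge0.
- by rewrite yc_lower_sol_n1 lexx x1_ge0.
- by rewrite yc_lower_sol_n2 lexx andbT (ge0_cp x2_ge0).2.
Qed.

Lemma f_low_lower_sol : f_low x lower_sol = t.
Proof.
rewrite /f_low yc_lower_sol_n1 yc_lower_sol_n2 yc_lower_sol // expr1.
by rewrite (addrC x.1) addrK subrr mulr0 subr0.
Qed.

Lemma S_opt_lower_sol : S_opt x lower_sol.
Proof.
split; first exact: lower_sol_feas.
move=> z feas; rewrite f_low_lower_sol.
exact: le_trans (f_low_le_y1 feas) (lower_feas_y1_le feas).
Qed.

Lemma S_opt_coupling y : S_opt x y -> yc y n.+1 = x.1 /\ yc y n.+2 = x.2.
Proof.
case=> feas opt.
have f_ge_t := opt _ lower_sol_feas; rewrite f_low_lower_sol in f_ge_t.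
have y1_le_t := lower_feas_y1_le feas.
have gap0 : x.1 + x.2 - yc y n.+1 - yc y n.+2 = 0.
  have f_eq : f_low x y = yc y 1.
    by apply/eqP; rewrite eq_le f_low_le_y1 //=; apply: le_trans f_ge_t.
  move: f_eq; rewrite /f_low -[RHS]subr0 => /subrI/eqP.
  by rewrite mulf_eq0 gt_eqF ?lower_feas_yn_gt0 // => /eqP.
case: feas => _ _ _ /andP[_ ?] /andP[_ ?]; lra.
Qed.

Lemma F_up_S_opt y : S_opt x y -> F_up x y = x.2 - x.1.
Proof. by move=> /S_opt_coupling[y1 y2]; rewrite /F_up y1 y2; lra. Qed.

End LowerLevel.

Arguments lower_sol {R} n x t _.

Theorem mainTheorem3 (R : realType) (n : nat) (lx1 ux1 lx2 ux2 : R) :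
  (2 <= n)%N -> 1 <= lx1 -> lx1 < ux1 -> 1 <= lx2 -> lx2 < ux2 ->
  (exists y : 'I_n.+2 -> R,
      bilevel_sol lx1 ux1 lx2 ux2 (lx1, ux2) y /\ F_up (lx1, ux2) y = - lx1 + ux2) /\
  (forall (x : R * R) (y : 'I_n.+2 -> R),
      bilevel_sol lx1 ux1 lx2 ux2 x y -> x = (lx1, ux2) /\ F_up x y = - lx1 + ux2).
Proof.
move=> n_ge2 lx1_ge1 lx1_lt_ux1 lx2_ge1 lx2_lt_ux2.
have n_gt0 : (0 < n)%N by lia.
have [t t_ge0 t_root] : exists2 t : R, 0 <= t & t + t ^+ (2 ^ n.-1) = 1 / 2.
  by apply: exists_root_addr_expr; rewrite ?expn_gt0 //; lra.
have F_up_graph (x : R * R) (y : 'I_n.+2 -> R) : upper_feas lx1 ux1 lx2 ux2 x -> S_opt x y ->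
    F_up x y = x.2 - x.1 /\ lx1 <= x.1 /\ x.2 <= ux2.
  case=> /andP[lx1_le _] /andP[lx2_le x2_le] opt; split; last by [].
  rewrite (F_up_S_opt n_gt0 t_ge0 t_root _ _ opt) //; lra.
have xs_feas : upper_feas lx1 ux1 lx2 ux2 (lx1, ux2).
  by rewrite /upper_feas /= lexx (ltW lx1_lt_ux1) (ltW lx2_lt_ux2) lexx.
have ys_opt : S_opt (lx1, ux2) (lower_sol n (lx1, ux2) t).
  by apply: (S_opt_lower_sol n_gt0 t_ge0 t_root) => /=; lra.
have [F_ys _] := F_up_graph _ _ xs_feas ys_opt.
split.
  exists (lower_sol n (lx1, ux2) t); rewrite F_ys addrC; split => //; split => //.
  by move=> x y feas opt; have [-> [? ?]] := F_up_graph _ _ feas opt; rewrite F_ys /=; lra.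
case=> [x1 x2] y [feas opt best].
have [F_y [/= lx1_le x2_le]] := F_up_graph _ _ feas opt.
have := best _ _ xs_feas ys_opt; rewrite F_y F_ys /= => F_le.
have [-> ->] : x1 = lx1 /\ x2 = ux2 by split; lra.
by rewrite addrC.
Qed.
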